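(* Let $U$ be an intersecting family of polynomials over $\mathbb{F}_q$ of degree at most $2$. Let $c\in\mathbb{F}_q$ and $\alpha,\beta\in\mathbb{F}_q$, and suppose that $U$ contains more than $\lfloor (q+1)/2\rfloor$ polynomials $h_i$ whose coefficient of $x^2$ equals $c$ and which satisfy $h_i(\alpha)=\beta$. Then every polynomial $f\in U$ whose coefficient of $x^2$ is not $c$ satisfies $f(\alpha)=\beta$.
   Context: A set of polynomials over $\mathbb{F}_q$ is intersecting if for any two members $f_1,f_2$ the graphs $\{(x,f_i(x)):x\in\mathbb{F}_q\}$ share at least one point. *)

From mathcomp Require Import all_boot all_algebra all_field.
From mathcomp Require Import finmap.
Set Implicit Arguments. Unset Strict Implicit. Unset Printing Implicit Defensive.
Import GRing.Theory.
Local Open Scope ring_scope.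
Local Open Scope fset_scope.

(* A family of polynomials over F is intersecting if any two members have
   graphs {(x, f x) : x in F} sharing a point, i.e. they agree at some x in F. *)
Definition intersecting (F : finFieldType) (U : {fset {poly F}}) : Prop :=
  forall f g, f \in U -> g \in U -> exists x : F, f.[x] = g.[x].

Definition deg_le2 (F : fieldType) (p : {poly F}) : bool := (size p <= 3)%N.

From mathcomp Require Import all_boot all_algebra all_field.
From mathcomp Require Import finmap.
From mathcomp Require Import zify ring.
Set Implicit Arguments. Unset Strict Implicit. Unset Printing Implicit Defensive.
Import GRing.Theory.
Local Open Scope fset_scope.
Local Open Scope ring_scope.

(* Suppose f in U has a different x^2-coefficient and f(alpha) <> beta, and let
   H be the family of the h_i.  Each h in H meets f, and h - f is a genuine
   quadratic, so h meets f in a point r_h and in its Vieta partner s_h, both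
   different from alpha.  Two members of H differ by a polynomial of degree
   <= 1 vanishing at alpha, so no point other than alpha lies on two of them:
   h |-> r_h and h |-> s_h are injective, and r_h = s_h' forces h = h' and a
   double root, i.e. beta - f(alpha) = (c - f_2)(r_h - alpha)^2, which has at
   most two solutions.  Hence 2|H| - 2 <= q - 1. *)

Section Quadratics.
Variable K : fieldType.
Implicit Types (p q g : {poly K}) (x r : K).

Lemma horner_size_le3 p x : (size p <= 3)%N ->
  p.[x] = p`_0 + p`_1 * x + p`_2 * x ^+ 2.
Proof.
move=> sp; rewrite (horner_coef_wide x sp) !big_ord_recr big_ord0 /=.
by rewrite add0r expr0 mulr1 expr1.
Qed.

Definition other_root g r := - (r + g`_1 / g`_2).

Lemma quadratic_factor g r x : (size g <= 3)%N -> g`_2 != 0 -> root g r ->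
  g.[x] = g`_2 * (x - r) * (x - other_root g r).
Proof.
move=> sg g2 /eqP; rewrite !horner_size_le3 // /other_root => gr.
have -> : g`_0 = - (g`_1 * r + g`_2 * r ^+ 2).
  by apply: subr0_eq; rewrite opprK addrA.
by field.
Qed.

Lemma root_other_root g r : (size g <= 3)%N -> g`_2 != 0 -> root g r ->
  root g (other_root g r).
Proof. by move=> sg g2 gr; rewrite /root (quadratic_factor _ sg g2 gr) subrr mulr0. Qed.

Lemma horner_double_root g r x : (size g <= 3)%N -> g`_2 != 0 -> root g r ->
  other_root g r = r -> g.[x] = g`_2 * (x - r) ^+ 2.
Proof. by move=> sg g2 gr rr; rewrite (quadratic_factor _ sg g2 gr) rr -mulrA. Qed.

Lemma roots_size_eq0 g rs : uniq rs -> all (root g) rs ->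
  (size g <= size rs)%N -> g = 0.
Proof.
move=> urs grs; apply: contraTeq => g0; rewrite -ltnNge.
exact: max_poly_roots.
Qed.

Lemma eq_poly_size_le3 p q a x : (size p <= 3)%N -> (size q <= 3)%N ->
  p`_2 = q`_2 -> a != x -> p.[a] = q.[a] -> p.[x] = q.[x] -> p = q.
Proof.
move=> sp sq pq2 ax pqa pqx; apply/eqP; rewrite -subr_eq0; apply/eqP.
apply: (@roots_size_eq0 _ [:: a; x]).
- by rewrite /= inE ax.
- by rewrite /= /root !hornerD !hornerN pqa pqx !subrr eqxx.
apply/leq_sizeP => -[|[|[|j]]] // _; first by rewrite coefB pq2 subrr.
by rewrite coefB !nth_default ?subrr // (leq_trans sp, leq_trans sq).
Qed.

End Quadratics.

Lemma card_fset_lt_notin (T : finType) (S : {fset T}) a :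
  a \notin S -> (#|` S| < #|T|)%N.
Proof.
move=> aS; have := max_card (mem (a :: S)).
by rewrite (card_uniqP _) //= aS fset_uniq.
Qed.

Section MeetingPencil.
Variables (F : finFieldType) (f : {poly F}) (c alpha beta : F).
Variable H : {fset {poly F}}.
Implicit Types (h : {poly F}) (x : F).
Hypothesis size_f : (size f <= 3)%N.
Hypothesis c_neq_f2 : c != f`_2.
Hypothesis f_alpha : f.[alpha] != beta.
Hypothesis H_pencil :
  forall h, h \in H -> [/\ (size h <= 3)%N, h`_2 = c & h.[alpha] = beta].
Hypothesis H_meets_f : forall h, h \in H -> exists x, h.[x] = f.[x].

Definition meet_point h := odflt alpha [pick x | h.[x] == f.[x]].
Definition second_meet_point h := other_root (h - f) (meet_point h).

Lemma size_sub_le3 h : h \in H -> (size (h - f)%R <= 3)%N.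
Proof.
by move=> /H_pencil[sh _ _]; rewrite (leq_trans (size_polyD _ _)) // size_polyN geq_max sh.
Qed.

Lemma coef2_sub h : h \in H -> (h - f)`_2 != 0.
Proof. by move=> /H_pencil[_ h2 _]; rewrite coefB h2 subr_eq0. Qed.

Lemma root_meet_point h : h \in H -> root (h - f) (meet_point h).
Proof.
move=> hH; rewrite /root /meet_point hornerD hornerN subr_eq0.
case: pickP => [x //|none].
by have [x hx] := H_meets_f hH; have := none x; rewrite hx eqxx.
Qed.

Lemma root_second_meet_point h : h \in H -> root (h - f) (second_meet_point h).
Proof.
move=> hH; apply: root_other_root (root_meet_point hH).
  exact: size_sub_le3.
exact: coef2_sub.
Qed.

Lemma root_sub_neq h x : h \in H -> root (h - f) x -> x != alpha.
Proof.
move=> /H_pencil[_ _ ha]; rewrite /root hornerD hornerN subr_eq0.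
by apply: contraTneq => ->; rewrite ha eq_sym.
Qed.

Lemma pencil_common_root h h' x : h \in H -> h' \in H ->
  root (h - f) x -> root (h' - f) x -> h = h'.
Proof.
move=> hH hH' hx hx'; have [sh h2 ha] := H_pencil hH.
have [sh' h2' ha'] := H_pencil hH'.
apply: (eq_poly_size_le3 sh sh' _ _ _ (x := x) (a := alpha)).
- by rewrite h2 h2'.
- by rewrite eq_sym (root_sub_neq hH hx).
- by rewrite ha ha'.
by move: hx hx'; rewrite /root !hornerD !hornerN !subr_eq0 => /eqP-> /eqP->.
Qed.

Lemma card_imfset_root (g : {poly F} -> F) :
  (forall h, h \in H -> root (h - f) (g h)) -> #|` g @` H| = #|` H|.
Proof.
move=> gH; apply/eqP/card_in_imfsetP => h h' hH hH' e.
by apply: (pencil_common_root hH hH' (gH h hH)); rewrite e gH.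
Qed.

Lemma card_meet_points_lt :
  (#|` meet_point @` H `|` second_meet_point @` H| < #|F|)%N.
Proof.
apply: (@card_fset_lt_notin _ _ alpha); apply/negP => /fsetUP[] /imfsetP[h hH ah].
  by have := root_sub_neq hH (root_meet_point hH); rewrite -ah eqxx.
by have := root_sub_neq hH (root_second_meet_point hH); rewrite -ah eqxx.
Qed.

Lemma card_meet_points_I_le2 :
  (#|` meet_point @` H `&` second_meet_point @` H| <= 2)%N.
Proof.
set d := c - f`_2; set gam := beta - f.[alpha].
have d0 : d != 0 by rewrite subr_eq0.
pose p := ('X - alpha%:P) ^+ 2 - (gam / d)%:P.
have sp : size p = 3%N.
  by rewrite size_polyDl size_exp_XsubC // size_polyN size_polyC; case: (_ != 0).
rewrite -ltnS -sp; apply: max_poly_roots (fset_uniq _).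
  by rewrite -size_poly_eq0 sp.
apply/allP => x /fsetIP[/imfsetP[h hH ->] /imfsetP[h' hH' e]].
have hh' : h = h'.
  apply: (pencil_common_root hH hH' (root_meet_point hH)).
  by rewrite e root_second_meet_point.
move: e; rewrite -{h' hH'}hh' => e.
have [_ h2 ha] := H_pencil hH.
have := horner_double_root alpha (size_sub_le3 hH) (coef2_sub hH) (root_meet_point hH).
move=> /(_ (esym e)); rewrite coefB h2 hornerD hornerN ha -/d -/gam -opprB sqrrN => gamE.
by rewrite /root !hornerE gamE; apply/eqP; field.
Qed.

Theorem card_meeting_pencil_le : ((#|` H|).*2 <= #|F|.+1)%N.
Proof.
have := cardfsUI (meet_point @` H) (second_meet_point @` H).
rewrite (card_imfset_root root_meet_point) (card_imfset_root root_second_meet_point).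
have := card_meet_points_lt; have := card_meet_points_I_le2; lia.
Qed.

End MeetingPencil.

Theorem lemma5 (F : finFieldType) (U : {fset {poly F}}) (c alpha beta : F) :
  intersecting U ->
  (forall f, f \in U -> deg_le2 f) ->
  ((#|F|.+1)./2 < #|` [fset h in U | (coefp 2 h == c) && (h.[alpha] == beta)]|)%N ->
  forall f, f \in U -> coefp 2 f != c -> f.[alpha] = beta.
Proof.
move=> Uint Udeg Hcard f fU fc; apply/eqP; apply: contraT => fab.
suff : ((#|` [fset h in U | (coefp 2 h == c) && (h.[alpha] == beta)]|).*2
         <= #|F|.+1)%N by lia.
apply: (card_meeting_pencil_le (c := c) (Udeg f fU) _ fab); first by rewrite eq_sym.
  by move=> h; rewrite !inE => /andP[hU /andP[/eqP <- /eqP ->]]; split; first exact: Udeg.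
by move=> h; rewrite !inE => /andP[hU _]; exact: Uint.
Qed.
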